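(* For all finite multisets $\Phi,\Gamma$ and every formula $\chi$: if $\Phi,\Box\Gamma\Rightarrow\chi$ has a proof of height $h$ in $\mathsf{G4iSLt}$, then $\Phi,\Gamma\Rightarrow\chi$ has a proof in $\mathsf{G4iSLt}$ of height at most $h$.
   Context: Formulas are built by the grammar $\varphi ::= p \mid \bot \mid \varphi\land\varphi \mid \varphi\lor\varphi \mid \varphi\to\varphi \mid \Box\varphi$, with $p$ ranging over a countably infinite set of propositional variables. For a multiset $\Gamma$, $\Box\Gamma=\{\Box\psi:\psi\in\Gamma\}$; a boxed formula is one of the form $\Box\psi$. A sequent is $\Gamma\Rightarrow\chi$ with $\Gamma$ a finite multiset of formulas and $\chi$ a formula. The sequent calculus $\mathsf{G4iSLt}$ has the following rules, where $p$ is a propositional variable and $\Phi$ always denotes a multiset containing no boxed formula: (⊥L) $\bot,\Gamma\Rightarrow\chi$ (no premise); (IdP) $\Gamma,p\Rightarrow p$ (no premise); (∧L) from $\Gamma,\varphi,\psi\Rightarrow\chi$ infer $\Gamma,\varphi\land\psi\Rightarrow\chi$; (∧R) from $\Gamma\Rightarrow\varphi$ and $\Gamma\Rightarrow\psi$ infer $\Gamma\Rightarrow\varphi\land\psi$; (∨L) from $\Gamma,\varphi\Rightarrow\chi$ and $\Gamma,\psi\Rightarrow\chi$ infer $\Gamma,\varphi\lor\psi\Rightarrow\chi$; (∨R$_i$), $i\in\{1,2\}$: from $\Gamma\Rightarrow\varphi_i$ infer $\Gamma\Rightarrow\varphi_1\lor\varphi_2$; (p→L) from $\Gamma,p,\varphi\Rightarrow\chi$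 infer $\Gamma,p,p\to\varphi\Rightarrow\chi$; (→R) from $\Gamma,\varphi\Rightarrow\psi$ infer $\Gamma\Rightarrow\varphi\to\psi$; (□→L) from $\Phi,\Gamma,\psi,\Box\varphi\Rightarrow\varphi$ and $\Phi,\Box\Gamma,\psi\Rightarrow\chi$ infer $\Phi,\Box\Gamma,\Box\varphi\to\psi\Rightarrow\chi$; (SLtR) from $\Phi,\Gamma,\Box\varphi\Rightarrow\varphi$ infer $\Phi,\Box\Gamma\Rightarrow\Box\varphi$; (∧→L) from $\Gamma,\varphi\to(\psi\to\chi)\Rightarrow\delta$ infer $\Gamma,(\varphi\land\psi)\to\chi\Rightarrow\delta$; (∨→L) from $\Gamma,\varphi\to\chi,\psi\to\chi\Rightarrow\delta$ infer $\Gamma,(\varphi\lor\psi)\to\chi\Rightarrow\delta$; (→→L) from $\Gamma,\psi\to\chi\Rightarrow\varphi\to\psi$ and $\Gamma,\chi\Rightarrow\delta$ infer $\Gamma,(\varphi\to\psi)\to\chi\Rightarrow\delta$. (In the rules above $\Phi$ is box-free; in the claim, $\Phi$ is an arbitrary finite multiset.) A proof of a sequent $S$ is a finite tree of sequents with root $S$ in which each interior node together with its children forms an instance of a rule (conclusion, premises) and each leaf is the conclusion of a premise-free rule; $S$ is provable if it has a proof. The height of a proof is the maximum number of nodes on a path from the root to a leaf. *)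

From Stdlib Require Import List Permutation Arith.
Import ListNotations.

Inductive form : Type :=
| Var : nat -> form
| Bot : form
| And : form -> form -> form
| Or  : form -> form -> form
| Imp : form -> form -> form
| Box : form -> form.

Definition boxfree (Phi : list form) : Prop :=
  forall A, In A Phi -> forall B, A <> Box B.

(* Multisets are represented by lists; every rule's conclusion context is
   taken up to permutation (Gamma' is a rearrangement of the displayed
   multiset), so provability depends only on the underlying multiset. *)
Inductive proof : list form -> form -> Type :=
| BotL (G G' : list form) (c : form) :
    Permutation G' (Bot :: G) -> proof G' c
| IdP (G G' : list form) (p : nat) :
    Permutation G' (Var p :: G) -> proof G' (Var p)
| AndL (G G' : list form) (a b c : form) :
    Permutation G' (And a b :: G) ->
    proof (a :: b :: G) c -> proof G' c
| AndR (G : list form) (a b : form) :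
    proof G a -> proof G b -> proof G (And a b)
| OrL (G G' : list form) (a b c : form) :
    Permutation G' (Or a b :: G) ->
    proof (a :: G) c -> proof (b :: G) c -> proof G' c
| OrR1 (G : list form) (a b : form) :
    proof G a -> proof G (Or a b)
| OrR2 (G : list form) (a b : form) :
    proof G b -> proof G (Or a b)
| PImpL (G G' : list form) (p : nat) (a c : form) :
    Permutation G' (Var p :: Imp (Var p) a :: G) ->
    proof (Var p :: a :: G) c -> proof G' c
| ImpR (G : list form) (a b : form) :
    proof (a :: G) b -> proof G (Imp a b)
| BoxImpL (Phi G G' : list form) (a b c : form) :
    boxfree Phi ->
    Permutation G' (Imp (Box a) b :: Phi ++ map Box G) ->
    proof (b :: Box a :: Phi ++ G) a ->
    proof (b :: Phi ++ map Box G) c ->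
    proof G' c
| SLtR (Phi G G' : list form) (a : form) :
    boxfree Phi ->
    Permutation G' (Phi ++ map Box G) ->
    proof (Box a :: Phi ++ G) a ->
    proof G' (Box a)
| AndImpL (G G' : list form) (a b c d : form) :
    Permutation G' (Imp (And a b) c :: G) ->
    proof (Imp a (Imp b c) :: G) d -> proof G' d
| OrImpL (G G' : list form) (a b c d : form) :
    Permutation G' (Imp (Or a b) c :: G) ->
    proof (Imp a c :: Imp b c :: G) d -> proof G' d
| ImpImpL (G G' : list form) (a b c d : form) :
    Permutation G' (Imp (Imp a b) c :: G) ->
    proof (Imp b c :: G) (Imp a b) ->
    proof (c :: G) d -> proof G' d.

Fixpoint height {G : list form} {c : form} (d : proof G c) : nat :=
  match d with
  | BotL _ _ _ _ => 1
  | IdP _ _ _ _ => 1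
  | AndL _ _ _ _ _ _ d1 => S (height d1)
  | AndR _ _ _ d1 d2 => S (Nat.max (height d1) (height d2))
  | OrL _ _ _ _ _ _ d1 d2 => S (Nat.max (height d1) (height d2))
  | OrR1 _ _ _ d1 => S (height d1)
  | OrR2 _ _ _ d1 => S (height d1)
  | PImpL _ _ _ _ _ _ d1 => S (height d1)
  | ImpR _ _ _ d1 => S (height d1)
  | BoxImpL _ _ _ _ _ _ _ _ d1 d2 => S (Nat.max (height d1) (height d2))
  | SLtR _ _ _ _ _ _ d1 => S (height d1)
  | AndImpL _ _ _ _ _ _ _ d1 => S (height d1)
  | OrImpL _ _ _ _ _ _ _ d1 => S (height d1)
  | ImpImpL _ _ _ _ _ _ _ d1 d2 => S (Nat.max (height d1) (height d2))
  end.

From Stdlib Require Import List Permutation Arith Lia.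
Import ListNotations.

(* Contexts are lists read up to permutation, so the statement is generalised
   ([unboxable_within]) to every context that is a rearrangement of
   Phi ++ map Box Gam, with the conclusion stated for every rearrangement of
   Phi ++ Gam; this makes a separate exchange lemma unnecessary.  The proof
   ([unbox_within]) is by induction on the derivation.
   - In the propositional rules the principal formulas are not boxed, so they
     lie in Phi ([nonbox_occurs_left]); the rule is re-applied to the premises
     unboxed by the induction hypothesis.
   - The modal rules (□→L) and (SLtR) have conclusion  Ph, Box G  with Ph
     box-free.  Splitting a context into its box-free part [nonboxed] and the
     formulas under its boxes [box_contents] gives G ~ box_contents Phi ++ Gam
     ([modal_context_split]); the new rule instance takes the box-free part of
     Phi ++ Gam, and its premises come from the induction hypothesis applied to
     the formulas boxed in Gam ([unbox_BoxImpL], [unbox_SLtR]). *)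

Definition form_eq_dec (A B : form) : {A = B} + {A <> B}.
Proof. decide equality; apply Nat.eq_dec. Defined.

(* Multiset equalities between lists are decided by comparing the number of
   occurrences of every formula; writing [a :: l] as [sing a ++ l] lets
   [count_occ_app] turn each such count into a linear expression. *)
Definition sing (a : form) : list form := [a].

Lemma cons_as_app (a : form) (l : list form) : a :: l = sing a ++ l.
Proof. reflexivity. Qed.

Ltac multiset_eq :=
  repeat match goal with H : Permutation _ _ |- _ => revert H end;
  rewrite ?cons_as_app, ?map_app;
  repeat (let H := fresh "H" in intros H;
          pose proof (proj1 (Permutation_count_occ form_eq_dec _ _) H); clear H);
  apply (Permutation_count_occ form_eq_dec); intros ?x;
  repeat match goal with H : forall _ : form, _ |- _ => specialize (H x) end;
  rewrite ?count_occ_app in *; lia.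

Ltac not_a_box := let B := fresh "B" in intros B ?; discriminate.

Definition provable_within (D : list form) (c : form) (n : nat) : Prop :=
  exists d : proof D c, height d <= n.

Definition nonboxed : list form -> list form :=
  flat_map (fun A => match A with Box _ => [] | _ => [A] end).

Definition box_contents : list form -> list form :=
  flat_map (fun A => match A with Box B => [B] | _ => [] end).

Lemma split_boxes (l : list form) :
  Permutation l (nonboxed l ++ map Box (box_contents l)).
Proof.
  induction l as [|[] l IH]; simpl; auto using Permutation_cons_app.
Qed.

Lemma nonboxed_map_Box (l : list form) : nonboxed (map Box l) = [].
Proof. induction l; auto. Qed.

Lemma box_contents_map_Box (l : list form) : box_contents (map Box l) = l.
Proof. induction l; simpl; congruence. Qed.

Lemma boxfree_cons (A : form) (l : list form) :
  boxfree (A :: l) -> (forall B, A <> Box B) /\ boxfree l.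
Proof. intros H; split; [apply H | intros C HC; apply H]; simpl; auto. Qed.

Lemma nonboxed_boxfree (l : list form) : boxfree l -> nonboxed l = l.
Proof.
  induction l as [|A l IH]; intros H; auto.
  apply boxfree_cons in H as [HA Hl].
  destruct A; simpl; try (f_equal; apply IH; exact Hl).
  exfalso; exact (HA _ eq_refl).
Qed.

Lemma box_contents_boxfree (l : list form) : boxfree l -> box_contents l = [].
Proof.
  induction l as [|A l IH]; intros H; auto.
  apply boxfree_cons in H as [HA Hl].
  destruct A; simpl; try (apply IH; exact Hl).
  exfalso; exact (HA _ eq_refl).
Qed.

Lemma boxfree_nonboxed (l : list form) : boxfree (nonboxed l).
Proof.
  induction l as [|A l IH]; intros C HC; [destruct HC|].
  destruct A; simpl in HC; try (apply IH; exact HC);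
    destruct HC as [<- | HC]; try (apply IH; exact HC); not_a_box.
Qed.

Lemma boxfree_app (l1 l2 : list form) :
  boxfree l1 -> boxfree l2 -> boxfree (l1 ++ l2).
Proof.
  intros H1 H2 A HA; apply in_app_or in HA as [HA | HA]; auto.
Qed.

Lemma nonbox_occurs_left (X : form) (G Phi Gam : list form) :
  (forall B, X <> Box B) ->
  Permutation (X :: G) (Phi ++ map Box Gam) ->
  exists P, Permutation Phi (X :: P) /\ Permutation G (P ++ map Box Gam).
Proof.
  intros HX HP.
  assert (HI : In X (Phi ++ map Box Gam))
    by (eapply Permutation_in; [exact HP | left; reflexivity]).
  apply in_app_or in HI as [HI | HI].
  - apply in_split in HI as [l1 [l2 ->]].
    exists (l1 ++ l2); split; multiset_eq.
  - apply in_map_iff in HI as [B [HB _]]; exfalso; exact (HX B (eq_sym HB)).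
Qed.

Ltac principal_in_left X G Phi Gam P :=
  destruct (nonbox_occurs_left X G Phi Gam ltac:(not_a_box) ltac:(multiset_eq))
    as [P [? ?]].

Lemma modal_context_split (Ph G P Gam : list form) :
  boxfree Ph ->
  Permutation (Ph ++ map Box G) (P ++ map Box Gam) ->
  Permutation Ph (nonboxed P) /\ Permutation G (box_contents P ++ Gam).
Proof.
  intros Hbf HP; split.
  - apply (Permutation_flat_map (fun A => match A with Box _ => [] | _ => [A] end)) in HP.
    rewrite !flat_map_app in HP; fold nonboxed in HP.
    rewrite !nonboxed_map_Box, nonboxed_boxfree, !app_nil_r in HP by exact Hbf.
    exact HP.
  - apply (Permutation_flat_map (fun A => match A with Box B => [B] | _ => [] end)) in HP.
    rewrite !flat_map_app in HP; fold box_contents in HP.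
    rewrite !box_contents_map_Box, box_contents_boxfree in HP by exact Hbf.
    exact HP.
Qed.

Definition unboxable_within (D : list form) (c : form) (n : nat) : Prop :=
  forall Phi Gam D',
    Permutation D (Phi ++ map Box Gam) ->
    Permutation D' (Phi ++ Gam) ->
    provable_within D' c n.

(* The new instance takes as box-free part the
   box-free part of  P ++ Gam; in the left premise the formulas boxed in Gam
   are unboxed, those boxed in P are already unboxed by the rule itself. *)
Lemma unbox_BoxImpL (Ph G P Gam D' : list form) (a b c : form) (n1 n2 : nat) :
  boxfree Ph ->
  Permutation (Ph ++ map Box G) (P ++ map Box Gam) ->
  Permutation D' (Imp (Box a) b :: P ++ Gam) ->
  unboxable_within (b :: Box a :: Ph ++ G) a n1 ->
  unboxable_within (b :: Ph ++ map Box G) c n2 ->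
  provable_within D' c (S (Nat.max n1 n2)).
Proof.
  intros bf HG HD' IH1 IH2.
  destruct (modal_context_split Ph G P Gam bf HG) as [HPh HGP].
  pose proof (split_boxes P) as HsP; pose proof (split_boxes Gam) as HsGam.
  destruct (IH1 (b :: Box a :: nonboxed P ++ box_contents P ++ nonboxed Gam)
              (box_contents Gam)
              (b :: Box a :: (nonboxed P ++ nonboxed Gam)
                 ++ box_contents P ++ box_contents Gam)
              ltac:(multiset_eq) ltac:(multiset_eq)) as [f1 Hf1].
  destruct (IH2 (b :: P) Gam
              (b :: (nonboxed P ++ nonboxed Gam)
                 ++ map Box (box_contents P ++ box_contents Gam))
              ltac:(multiset_eq) ltac:(multiset_eq)) as [f2 Hf2].
  exists (BoxImpL (nonboxed P ++ nonboxed Gam) (box_contents P ++ box_contents Gam)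
            D' a b c (boxfree_app _ _ (boxfree_nonboxed P) (boxfree_nonboxed Gam))
            ltac:(multiset_eq) f1 f2); simpl; lia.
Qed.

Lemma unbox_SLtR (Ph G Phi Gam D' : list form) (a : form) (n : nat) :
  boxfree Ph ->
  Permutation (Ph ++ map Box G) (Phi ++ map Box Gam) ->
  Permutation D' (Phi ++ Gam) ->
  unboxable_within (Box a :: Ph ++ G) a n ->
  provable_within D' (Box a) (S n).
Proof.
  intros bf HG HD' IH.
  destruct (modal_context_split Ph G Phi Gam bf HG) as [HPh HGP].
  pose proof (split_boxes Phi) as HsPhi; pose proof (split_boxes Gam) as HsGam.
  destruct (IH (Box a :: nonboxed Phi ++ box_contents Phi ++ nonboxed Gam)
              (box_contents Gam)
              (Box a :: (nonboxed Phi ++ nonboxed Gam)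
                 ++ box_contents Phi ++ box_contents Gam)
              ltac:(multiset_eq) ltac:(multiset_eq)) as [f Hf].
  exists (SLtR (nonboxed Phi ++ nonboxed Gam) (box_contents Phi ++ box_contents Gam)
            D' a (boxfree_app _ _ (boxfree_nonboxed Phi) (boxfree_nonboxed Gam))
            ltac:(multiset_eq) f); simpl; lia.
Qed.

Lemma unbox_within (D : list form) (c : form) (d : proof D c) :
  unboxable_within D c (height d).
Proof.
  induction d as
    [G G' c p | G G' n p | G G' a b c p d IH | G a b d1 IH1 d2 IH2
    | G G' a b c p d1 IH1 d2 IH2 | G a b d IH | G a b d IH
    | G G' n a c p d IH | G a b d IH
    | Ph G G' a b c bf p d1 IH1 d2 IH2 | Ph G G' a bf p d IH
    | G G' a b c e p d IH | G G' a b c e p d IH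
    | G G' a b c e p d1 IH1 d2 IH2 ];
  intros Phi Gam D' HD HD'.
  -
    principal_in_left Bot G Phi Gam P.
    exists (BotL (P ++ Gam) D' c ltac:(multiset_eq)); simpl; lia.
  -
    principal_in_left (Var n) G Phi Gam P.
    exists (IdP (P ++ Gam) D' n ltac:(multiset_eq)); simpl; lia.
  -
    principal_in_left (And a b) G Phi Gam P.
    destruct (IH (a :: b :: P) Gam (a :: b :: P ++ Gam) ltac:(multiset_eq) ltac:(multiset_eq))
      as [e He].
    exists (AndL (P ++ Gam) D' a b c ltac:(multiset_eq) e); simpl; lia.
  -
    destruct (IH1 Phi Gam D' HD HD') as [e1 He1], (IH2 Phi Gam D' HD HD') as [e2 He2].
    exists (AndR D' a b e1 e2); simpl; lia.
  -
    principal_in_left (Or a b) G Phi Gam P.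
    destruct (IH1 (a :: P) Gam (a :: P ++ Gam) ltac:(multiset_eq) ltac:(multiset_eq))
      as [e1 He1].
    destruct (IH2 (b :: P) Gam (b :: P ++ Gam) ltac:(multiset_eq) ltac:(multiset_eq))
      as [e2 He2].
    exists (OrL (P ++ Gam) D' a b c ltac:(multiset_eq) e1 e2); simpl; lia.
  -
    destruct (IH Phi Gam D' HD HD') as [e He]; exists (OrR1 D' a b e); simpl; lia.
  -
    destruct (IH Phi Gam D' HD HD') as [e He]; exists (OrR2 D' a b e); simpl; lia.
  - (* p→L: both principal formulas are non-boxed *)
    principal_in_left (Var n) (Imp (Var n) a :: G) Phi Gam P.
    principal_in_left (Imp (Var n) a) G P Gam Q.
    destruct (IH (Var n :: a :: Q) Gam (Var n :: a :: Q ++ Gam)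
                ltac:(multiset_eq) ltac:(multiset_eq)) as [f Hf].
    exists (PImpL (Q ++ Gam) D' n a c ltac:(multiset_eq) f); simpl; lia.
  -
    destruct (IH (a :: Phi) Gam (a :: D') ltac:(multiset_eq) ltac:(multiset_eq))
      as [e He].
    exists (ImpR D' a b e); simpl; lia.
  -
    principal_in_left (Imp (Box a) b) (Ph ++ map Box G) Phi Gam P.
    exact (unbox_BoxImpL Ph G P Gam D' a b c _ _ bf ltac:(assumption) ltac:(multiset_eq)
             IH1 IH2).
  -
    exact (unbox_SLtR Ph G Phi Gam D' a _ bf ltac:(multiset_eq) HD' IH).
  -
    principal_in_left (Imp (And a b) c) G Phi Gam P.
    destruct (IH (Imp a (Imp b c) :: P) Gam (Imp a (Imp b c) :: P ++ Gam)
                ltac:(multiset_eq) ltac:(multiset_eq)) as [f Hf].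
    exists (AndImpL (P ++ Gam) D' a b c e ltac:(multiset_eq) f); simpl; lia.
  -
    principal_in_left (Imp (Or a b) c) G Phi Gam P.
    destruct (IH (Imp a c :: Imp b c :: P) Gam (Imp a c :: Imp b c :: P ++ Gam)
                ltac:(multiset_eq) ltac:(multiset_eq)) as [f Hf].
    exists (OrImpL (P ++ Gam) D' a b c e ltac:(multiset_eq) f); simpl; lia.
  -
    principal_in_left (Imp (Imp a b) c) G Phi Gam P.
    destruct (IH1 (Imp b c :: P) Gam (Imp b c :: P ++ Gam)
                ltac:(multiset_eq) ltac:(multiset_eq)) as [f1 Hf1].
    destruct (IH2 (c :: P) Gam (c :: P ++ Gam) ltac:(multiset_eq) ltac:(multiset_eq))
      as [f2 Hf2].
    exists (ImpImpL (P ++ Gam) D' a b c e ltac:(multiset_eq) f1 f2); simpl; lia.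
Qed.

Theorem mainTheorem7 :
  forall (Phi G : list form) (chi : form) (h : nat)
         (d : proof (Phi ++ map Box G) chi),
    height d = h ->
    exists d' : proof (Phi ++ G) chi, height d' <= h.
Proof.
  intros Phi G chi h d <-.
  exact (unbox_within _ _ d Phi G (Phi ++ G) (Permutation_refl _) (Permutation_refl _)).
Qed.
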